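(* Let $N\in\mathbb N$, $\alpha,\beta>-1$, let $x_0<\dots<x_N$ be the JGL nodes with Lagrange basis $h_0,\dots,h_N$, and let $\mu\in(k-1,k)$ with $k\in\mathbb N$. Then $$ {}^R\hat{\mathbf D}^{(\mu)}=\breve{\mathbf D}^{(k)}\,\hat{\mathbf I}^{(k-\mu)}, $$ where $\breve{\mathbf D}^{(k)}_{ij}=(1+x)^\mu D^k\{(1+x)^{k-\mu}h_j(x)\}\big|_{x=x_i}$ for $0\le i,j\le N$. In particular, for $k=1$, $\breve{\mathbf D}^{(1)}=(1-\mu)\mathbf I_{N+1}+\operatorname{diag}(1+x_0,\dots,1+x_N)\,\mathbf D$, where $\mathbf D_{ij}=h_j'(x_i)$.
   Context: For $\rho>0$, $(I_-^\rho u)(x)=\frac{1}{\Gamma(\rho)}\int_{-1}^x (x-y)^{\rho-1}u(y)\,dy$, $D^k=d^k/dx^k$; for $\mu\in(k-1,k)$ the Riemann–Liouville derivative is ${}^R D_-^\mu u=D^k(I_-^{k-\mu}u)$. Modified operators: $\hat I_-^\mu u=(1+x)^{-\mu}I_-^\mu u$ and ${}^R\hat D_-^\mu u=(1+x)^{\mu}\,{}^R D_-^\mu u$; applied to polynomials these give polynomials, whose values at $x=-1$ are taken. The JGL nodes $x_0<\dots<x_N$ are the zeros of $(1-x^2)\frac{d}{dx}P_N^{(\alpha,\beta)}$ (Jacobi polynomial, Szegő normalization), and $h_j\in\mathcal P_N$ satisfies $h_j(x_i)=\delta_{ij}$. The matrices are ${}^R\hat{\mathbf D}^{(\mu)}_{ij}=({}^R\hat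 D_-^\mu h_j)(x_i)$ and $\hat{\mathbf I}^{(\nu)}_{ij}=(\hat I_-^\nu h_j)(x_i)$, $0\le i,j\le N$. *)

From Stdlib Require Import Reals Lra Lia List ClassicalEpsilon Factorial.
Open Scope R_scope.

Fixpoint prodR (f : nat -> R) (n : nat) : R :=
  match n with O => 1 | S n' => prodR f n' * f n' end.

Definition gbinom (a : R) (m : nat) : R :=
  prodR (fun i => a - INR i) m / INR (fact m).

(* Euler's Gamma function, via the Euler--Gauss limit
   Gamma(s) = lim_n n! n^s / (s (s+1) ... (s+n)) *)
Definition Gamma (s : R) : R :=
  epsilon (inhabits 0)
    (fun g => Un_cv (fun n => INR (fact n) * Rpower (INR n) s
                               / prodR (fun m => s + INR m) (S n)) g).

(* polynomial given by its coefficient list (constant term first) *)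
Definition peval (p : list R) (x : R) : R :=
  fold_right (fun c acc => c + x * acc) 0 p.

Definition deriv (f : R -> R) (x : R) : R :=
  epsilon (inhabits 0) (fun l => derivable_pt_lim f x l).
Fixpoint Dn (k : nat) (f : R -> R) : R -> R :=
  match k with O => f | S k' => deriv (Dn k' f) end.

Definition improper_int_upper (f : R -> R) (a b v : R) : Prop :=
  forall eps, eps > 0 -> exists delta, delta > 0 /\
    forall e, 0 < e < delta -> e < b - a ->
      exists pr : Riemann_integrable f a (b - e), Rabs (RiemannInt pr - v) < eps.

Definition RLint (rho : R) (u : R -> R) (x : R) : R :=
  epsilon (inhabits 0)
    (fun v => improper_int_upper (fun y => Rpower (x - y) (rho - 1) * u y) (-1) x v)
  / Gamma rho.

Definition RLder (mu : R) (k : nat) (u : R -> R) : R -> R :=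
  Dn k (RLint (INR k - mu) u).

Definition hatI (rho : R) (u : R -> R) (x : R) : R :=
  Rpower (1 + x) (- rho) * RLint rho u x.
Definition hatD (mu : R) (k : nat) (u : R -> R) (x : R) : R :=
  Rpower (1 + x) mu * RLder mu k u x.

(* value at x of "the polynomial" f, where f is a function that is a
   polynomial on (-1,1]; this gives the value at x = -1 by polynomial
   continuation, as in the paper. *)
Definition poly_val (f : R -> R) (x : R) : R :=
  peval (epsilon (inhabits nil)
           (fun p => forall y, -1 < y <= 1 -> peval p y = f y)) x.

(* Jacobi polynomial P_n^{(alpha,beta)}, Szego normalization (Szego 4.3.2) *)
Definition jacobiP (alpha beta : R) (n : nat) (x : R) : R :=
  sum_f_R0 (fun s => gbinom (INR n + alpha) (n - s) * gbinom (INR n + beta) s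
                     * ((x - 1) / 2) ^ s * ((x + 1) / 2) ^ (n - s)) n.

Definition is_JGL_node (alpha beta : R) (N : nat) (t : R) : Prop :=
  exists l, derivable_pt_lim (jacobiP alpha beta N) t l /\ (1 - t ^ 2) * l = 0.

(* the matrices (indices 0..N); x = nodes, h j = coefficient list of h_j *)
Definition hatDmat (mu : R) (k : nat) (x : nat -> R) (h : nat -> list R)
  (i j : nat) : R :=
  poly_val (hatD mu k (peval (h j))) (x i).
Definition hatImat (nu : R) (x : nat -> R) (h : nat -> list R) (i j : nat) : R :=
  poly_val (hatI nu (peval (h j))) (x i).
Definition breveDmat (mu : R) (k : nat) (x : nat -> R) (h : nat -> list R)
  (i j : nat) : R :=
  poly_val (fun t => Rpower (1 + t) mu
                     * Dn k (fun s => Rpower (1 + s) (INR k - mu) * peval (h j) s) t)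
           (x i).
Definition Dmat (x : nat -> R) (h : nat -> list R) (i j : nat) : R :=
  deriv (peval (h j)) (x i).

Definition kron (i j : nat) : R := if Nat.eqb i j then 1 else 0.

(* For a polynomial u and r = k - mu > 0 the Riemann-Liouville integral I^r u is
   (1+x)^r times a polynomial of degree at most deg u: expanding u in powers of
   (1+y) and writing (1+y) = (1+x) - (x-y) reduces everything to the Abel kernel
   integral  int_{-1}^x (x-y)^(r-1) dy = (1+x)^r / r.  Hence hat I^r h_j is a
   polynomial of degree <= N and is reproduced by its Lagrange interpolant:
   hat I^r h_j = sum_l (hat I^r h_j)(x_l) h_l.  On the other hand, for a
   polynomial f, (1+x)^(k-b) D^k{(1+x)^b f} = T_{b-k+1} ... T_{b-1} T_b f with the
   linear operators T_c f = c f + (1+x) f', so applying it with b = k - mu to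
   both sides of the interpolation identity gives the matrix factorisation; for
   k = 1 it is T_{1-mu} h_j = (1-mu) h_j + (1+x) h_j'. *)

From Stdlib Require Import Reals List Lra Lia ClassicalEpsilon FunctionalExtensionality.
From Coquelicot Require Import Coquelicot.
Open Scope R_scope.

(** * Polynomials as coefficient lists *)

Fixpoint padd (p q : list R) : list R :=
  match p, q with
  | nil, _ => q
  | _, nil => p
  | a :: p', b :: q' => (a + b) :: padd p' q'
  end.

Definition pscale (c : R) (p : list R) : list R := map (Rmult c) p.

Lemma peval_cons a p s : peval (a :: p) s = a + s * peval p s.
Proof. reflexivity. Qed.

Lemma peval_padd p q s : peval (padd p q) s = peval p s + peval q s.
Proof.
  revert q; induction p as [|a p IH]; intros [|b q]; simpl; try ring.
  rewrite IH; simpl; ring.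
Qed.

Lemma peval_pscale c p s : peval (pscale c p) s = c * peval p s.
Proof.
  induction p as [|a p IH]; simpl; [ring|].
  simpl in IH; rewrite IH; ring.
Qed.

Lemma length_padd p q : length (padd p q) = Nat.max (length p) (length q).
Proof. revert q; induction p as [|a p IH]; intros [|b q]; simpl; auto. Qed.

Lemma length_pscale c p : length (pscale c p) = length p.
Proof. apply length_map. Qed.

Lemma peval_shift p c : exists q, (length q <= length p)%nat /\
  forall s, peval q s = peval p (s + c).
Proof.
  induction p as [|a p [q [Hl Hq]]].
  - exists nil; simpl; split; auto.
  - exists (padd (a :: nil) (padd (pscale c q) (0 :: q))); split.
    + rewrite !length_padd, length_pscale; simpl. rewrite Nat.max_r by lia. lia.
    + intro s. rewrite !peval_padd, peval_pscale, !peval_cons, Hq. simpl. ring.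
Qed.

Lemma peval_factor_root p r : exists q, (length q <= pred (length p))%nat /\
  forall s, peval p s - peval p r = (s - r) * peval q s.
Proof.
  induction p as [|a p [q [Hl Hq]]].
  - exists nil; simpl; split; auto. intros; ring.
  - exists (padd p (pscale r q)); split.
    + rewrite length_padd, length_pscale; simpl. lia.
    + intro s. rewrite peval_padd, peval_pscale, !peval_cons.
      replace (a + s * peval p s - (a + r * peval p r))
        with ((s - r) * peval p s + r * (peval p s - peval p r)) by ring.
      rewrite Hq. ring.
Qed.

Lemma peval_eq0_of_roots n : forall p (r : nat -> R), (length p <= n)%nat ->
  (forall i j, (i < n)%nat -> (j < n)%nat -> i <> j -> r i <> r j) ->
  (forall i, (i < n)%nat -> peval p (r i) = 0) -> forall s, peval p s = 0.
Proof.
  induction n as [|n IH]; intros p r Hl Hr Hz s.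
  - destruct p; simpl in *; [reflexivity | lia].
  - destruct (peval_factor_root p (r n)) as [q [Hql Hq]].
    assert (Hq0 : forall s, peval q s = 0).
    { apply (IH q r); [lia | intros; apply Hr; lia |].
      intros i Hi. specialize (Hq (r i)). rewrite !Hz in Hq by lia.
      assert (r i - r n <> 0) by (intro E; apply (Hr i n); try lia; lra).
      apply (Rmult_eq_reg_l (r i - r n)); lra. }
    specialize (Hq s). rewrite Hq0, Hz in Hq by lia. lra.
Qed.

(* The points 1/(i+1) supply infinitely many roots in (-1,1]. *)
Lemma peval_eq0_of_Ioc p :
  (forall y, -1 < y <= 1 -> peval p y = 0) -> forall s, peval p s = 0.
Proof.
  intro H. apply (peval_eq0_of_roots (length p) p (fun i => / INR (S i))); auto.
  - intros i j _ _ Hij E. apply Hij, Nat.succ_inj, INR_eq.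
    rewrite <- (Rinv_inv (INR (S i))), <- (Rinv_inv (INR (S j))), E; auto.
  - intros i _. apply H.
    assert (1 <= INR (S i)) by (rewrite S_INR; pose proof (pos_INR i); lra).
    split.
    + assert (0 < / INR (S i)) by (apply Rinv_0_lt_compat; lra). lra.
    + rewrite <- Rinv_1. apply Rinv_le_contravar; lra.
Qed.

Definition is_poly (f : R -> R) : Prop := exists p, forall s, f s = peval p s.

Lemma is_poly_const c : is_poly (fun _ => c).
Proof. exists (c :: nil); intro; simpl; ring. Qed.

Lemma is_poly_peval p : is_poly (peval p).
Proof. exists p; auto. Qed.

Lemma is_poly_plus f g : is_poly f -> is_poly g -> is_poly (fun s => f s + g s).
Proof.
  intros [p Hp] [q Hq]; exists (padd p q); intro.
  rewrite peval_padd, Hp, Hq; auto.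
Qed.

Lemma is_poly_scal c f : is_poly f -> is_poly (fun s => c * f s).
Proof. intros [p Hp]; exists (pscale c p); intro; rewrite peval_pscale, Hp; auto. Qed.

Lemma is_poly_mult_id f : is_poly f -> is_poly (fun s => s * f s).
Proof. intros [p Hp]; exists (0 :: p); intro; rewrite peval_cons, Hp; ring. Qed.

Lemma is_poly_ext f g : (forall s, f s = g s) -> is_poly f -> is_poly g.
Proof. intros H [p Hp]; exists p; intro; rewrite <- H; auto. Qed.

Lemma poly_val_is_poly f g : is_poly g -> (forall y, -1 < y <= 1 -> f y = g y) ->
  forall z, poly_val f z = g z.
Proof.
  intros [q Hq] H z. unfold poly_val.
  set (P := fun p : list R => forall y, -1 < y <= 1 -> peval p y = f y).
  assert (Hs : P (epsilon (inhabits nil) P)).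
  { apply epsilon_spec. exists q; intros y Hy; rewrite H, Hq; auto. }
  set (p := epsilon (inhabits nil) P) in *.
  assert (Hz := peval_eq0_of_Ioc (padd p (pscale (-1) q))).
  rewrite Hq. specialize (Hz ltac:(intros y Hy;
    rewrite peval_padd, peval_pscale, (Hs y Hy), H, Hq by auto; ring) z).
  rewrite peval_padd, peval_pscale in Hz. lra.
Qed.

Lemma deriv_of_lim f s l : derivable_pt_lim f s l -> deriv f s = l.
Proof.
  intro H. apply (uniqueness_limite f s); auto.
  apply (epsilon_spec (inhabits 0) (fun l => derivable_pt_lim f s l)). eauto.
Qed.

Lemma derivable_pt_lim_peval p : exists f', is_poly f' /\
  forall s, derivable_pt_lim (peval p) s (f' s).
Proof.
  induction p as [|a p [g [Hg Hd]]].
  - exists (fun _ => 0); split; [apply is_poly_const|].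
    intro s; apply derivable_pt_lim_const.
  - exists (fun s => peval p s + s * g s); split.
    + apply is_poly_plus; [apply is_poly_peval | apply is_poly_mult_id; auto].
    + intro s. simpl.
      replace (peval p s + s * g s) with (0 + (1 * peval p s + s * g s)) by ring.
      apply (derivable_pt_lim_plus (fun _ => a) (fun s => s * peval p s)).
      * apply derivable_pt_lim_const.
      * apply (derivable_pt_lim_mult id (peval p)); auto.
        apply derivable_pt_lim_id.
Qed.

Lemma is_poly_deriv f : is_poly f ->
  is_poly (deriv f) /\ forall s, derivable_pt_lim f s (deriv f s).
Proof.
  intros [p Hp].
  replace f with (peval p) by (apply functional_extensionality; auto).
  destruct (derivable_pt_lim_peval p) as [g [Hg Hd]].
  replace (deriv (peval p)) with g
    by (apply functional_extensionality; intro; symmetry; apply deriv_of_lim; auto).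
  auto.
Qed.

Lemma derivable_pt_lim_sum (c : nat -> R) (g : nat -> R -> R) n s :
  (forall l, is_poly (g l)) ->
  derivable_pt_lim (fun y => sum_f_R0 (fun l => c l * g l y) n) s
    (sum_f_R0 (fun l => c l * deriv (g l) s) n).
Proof.
  intro Hg. induction n as [|n IH]; simpl.
  - apply derivable_pt_lim_scal, is_poly_deriv; auto.
  - apply (derivable_pt_lim_plus (fun y => sum_f_R0 (fun l => c l * g l y) n)
      (fun y => c (S n) * g (S n) y)); auto.
    apply derivable_pt_lim_scal, is_poly_deriv; auto.
Qed.

Lemma derivable_pt_lim_local f g s l : (forall y, -1 < y -> f y = g y) -> -1 < s ->
  derivable_pt_lim g s l -> derivable_pt_lim f s l.
Proof.
  intros E Hs H eps Heps. destruct (H eps Heps) as [d Hd].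
  assert (Hp : 0 < Rmin d (s + 1)) by (apply Rmin_pos; [apply (cond_pos d) | lra]).
  exists (mkposreal _ Hp). intros t Ht0 Ht. simpl in Ht.
  assert (Hm := Rmin_l d (s + 1)). assert (Hm' := Rmin_r d (s + 1)).
  assert (Rabs t < s + 1) by lra. apply Rabs_def2 in H0.
  rewrite !E by lra. apply Hd; auto. lra.
Qed.

Lemma derivable_pt_lim_Rpower_affine a c r y : 0 < a + c * y ->
  derivable_pt_lim (fun z => Rpower (a + c * z) r) y (r * Rpower (a + c * y) (r - 1) * c).
Proof.
  intro Hy. apply (derivable_pt_lim_comp (fun z => a + c * z) (fun z => Rpower z r)).
  - assert (H := derivable_pt_lim_plus (fun _ => a) (fun z => c * z) y 0 (c * 1)
      (derivable_pt_lim_const a y)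
      (derivable_pt_lim_scal id c y 1 (derivable_pt_lim_id y))).
    rewrite Rplus_0_l, Rmult_1_r in H. exact H.
  - apply derivable_pt_lim_power. auto.
Qed.

(** * Derivatives of (1+x)^b times a polynomial *)

Definition euler_op (c : R) (f : R -> R) (s : R) : R := c * f s + (1 + s) * deriv f s.

Fixpoint iter_euler_op (k : nat) (b : R) (f : R -> R) : R -> R :=
  match k with O => f | S k' => euler_op (b - INR k') (iter_euler_op k' b f) end.

Lemma is_poly_euler_op c f : is_poly f -> is_poly (euler_op c f).
Proof.
  intro Hf. destruct (is_poly_deriv f Hf) as [Hd _]. unfold euler_op.
  apply is_poly_plus; [apply is_poly_scal; auto|].
  apply (is_poly_ext (fun s => deriv f s + s * deriv f s)); [intro; ring|].
  apply is_poly_plus, is_poly_mult_id; auto.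
Qed.

Lemma is_poly_iter_euler_op k b f : is_poly f -> is_poly (iter_euler_op k b f).
Proof. intro Hf; induction k; simpl; auto; apply is_poly_euler_op; auto. Qed.

Lemma derivable_pt_lim_weight_mul c f s : is_poly f -> -1 < s ->
  derivable_pt_lim (fun y => Rpower (1 + y) c * f y) s
    (Rpower (1 + s) (c - 1) * euler_op c f s).
Proof.
  intros Hf Hs. destruct (is_poly_deriv f Hf) as [_ Hd].
  assert (Hw := derivable_pt_lim_Rpower_affine 1 1 c s).
  rewrite !Rmult_1_l, Rmult_1_r in Hw.
  replace (fun y => Rpower (1 + 1 * y) c) with (fun y => Rpower (1 + y) c) in Hw
    by (apply functional_extensionality; intro; rewrite Rmult_1_l; auto).
  assert (E : Rpower (1 + s) c = Rpower (1 + s) (c - 1) * (1 + s)).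
  { rewrite <- (Rpower_1 (1 + s)) at 3 by lra. rewrite <- Rpower_plus. f_equal; ring. }
  replace (Rpower (1 + s) (c - 1) * euler_op c f s)
    with (c * Rpower (1 + s) (c - 1) * f s + Rpower (1 + s) c * deriv f s)
    by (rewrite E; unfold euler_op; ring).
  apply (derivable_pt_lim_mult (fun y => Rpower (1 + y) c) f); auto.
  apply Hw; lra.
Qed.

Lemma Dn_weight_mul k b f g : is_poly f ->
  (forall s, -1 < s -> g s = Rpower (1 + s) b * f s) ->
  forall s, -1 < s -> Dn k g s = Rpower (1 + s) (b - INR k) * iter_euler_op k b f s.
Proof.
  intros Hf Hg. induction k as [|k IH]; intros s Hs.
  - simpl. rewrite Hg by auto. f_equal; f_equal; ring.
  - change (Dn (S k) g s) with (deriv (Dn k g) s).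
    change (iter_euler_op (S k) b f) with (euler_op (b - INR k) (iter_euler_op k b f)).
    apply deriv_of_lim.
    apply (derivable_pt_lim_local _ (fun y => Rpower (1 + y) (b - INR k)
                                               * iter_euler_op k b f y)); auto.
    replace (b - INR (S k)) with (b - INR k - 1) by (rewrite S_INR; ring).
    apply derivable_pt_lim_weight_mul; auto. apply is_poly_iter_euler_op; auto.
Qed.

Lemma weight_Dn_weight_mul k b f g : is_poly f ->
  (forall s, -1 < s -> g s = Rpower (1 + s) b * f s) ->
  forall s, -1 < s -> Rpower (1 + s) (INR k - b) * Dn k g s = iter_euler_op k b f s.
Proof.
  intros Hf Hg s Hs. rewrite (Dn_weight_mul k b f g) by auto.
  rewrite <- Rmult_assoc, <- Rpower_plus.
  replace (INR k - b + (b - INR k)) with 0 by ring. rewrite Rpower_O by lra. ring.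
Qed.

Lemma euler_op_sum c (a : nat -> R) (g : nat -> R -> R) n :
  (forall l, is_poly (g l)) ->
  euler_op c (fun y => sum_f_R0 (fun l => a l * g l y) n) =
  fun y => sum_f_R0 (fun l => a l * euler_op c (g l) y) n.
Proof.
  intro Hg. apply functional_extensionality. intro s. unfold euler_op.
  rewrite (deriv_of_lim _ _ _ (derivable_pt_lim_sum a g n s Hg)).
  induction n as [|n IH]; simpl; [ring|]. rewrite <- IH. ring.
Qed.

Lemma iter_euler_op_sum k b (a : nat -> R) (g : nat -> R -> R) n :
  (forall l, is_poly (g l)) ->
  iter_euler_op k b (fun y => sum_f_R0 (fun l => a l * g l y) n) =
  fun y => sum_f_R0 (fun l => a l * iter_euler_op k b (g l) y) n.
Proof.
  intro Hg. induction k as [|k IH]; simpl; auto.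
  rewrite IH. apply euler_op_sum. intro; apply is_poly_iter_euler_op; auto.
Qed.

(** * Riemann-Liouville integrals of polynomials *)

(* The improper integral of [improper_int_upper], with the proper integrals
   taken in the sense of Coquelicot's [is_RInt]. *)
Definition is_RInt_upper (f : R -> R) (a b v : R) : Prop :=
  forall eps, eps > 0 -> exists delta, delta > 0 /\
    forall e, 0 < e < delta -> e < b - a ->
      exists w, is_RInt f a (b - e) w /\ Rabs (w - v) < eps.

Lemma improper_int_upper_is_RInt_upper f a b v :
  is_RInt_upper f a b v -> improper_int_upper f a b v.
Proof.
  intros H eps Heps. destruct (H eps Heps) as [d [Hd K]].
  exists d; split; auto. intros e He1 He2.
  destruct (K e He1 He2) as [w [Hw Hv]].
  assert (pr : Riemann_integrable f a (b - e)) by (apply ex_RInt_Reals_0; exists w; auto).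
  exists pr. rewrite <- RInt_Reals, (is_RInt_unique _ _ _ _ Hw). auto.
Qed.

Lemma improper_int_upper_unique f a b v1 v2 : a < b ->
  improper_int_upper f a b v1 -> improper_int_upper f a b v2 -> v1 = v2.
Proof.
  intros Hab H1 H2. destruct (Req_dec v1 v2) as [|Hne]; auto. exfalso.
  set (eps := Rabs (v1 - v2) / 2).
  assert (Heps : eps > 0).
  { assert (0 < Rabs (v1 - v2)) by (apply Rabs_pos_lt; lra). unfold eps; lra. }
  destruct (H1 eps Heps) as [d1 [Hd1 K1]].
  destruct (H2 eps Heps) as [d2 [Hd2 K2]].
  set (e := Rmin (Rmin d1 d2) (b - a) / 2).
  assert (Hm : 0 < Rmin (Rmin d1 d2) (b - a)) by (repeat apply Rmin_pos; lra).
  assert (Hm1 := Rmin_l (Rmin d1 d2) (b - a)). assert (Hm2 := Rmin_r (Rmin d1 d2) (b - a)).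
  assert (Hm3 := Rmin_l d1 d2). assert (Hm4 := Rmin_r d1 d2).
  destruct (K1 e) as [pr1 E1]; [unfold e; lra | unfold e; lra |].
  destruct (K2 e) as [pr2 E2]; [unfold e; lra | unfold e; lra |].
  rewrite (RiemannInt_P5 pr1 pr2) in E1.
  assert (Rabs (v1 - v2) <= Rabs (RiemannInt pr2 - v1) + Rabs (RiemannInt pr2 - v2)).
  { replace (v1 - v2) with (- (RiemannInt pr2 - v1) + (RiemannInt pr2 - v2)) by ring.
    eapply Rle_trans; [apply Rabs_triang|]. rewrite Rabs_Ropp. lra. }
  unfold eps in *. lra.
Qed.

Lemma is_RInt_upper_ext f g a b v : (forall y, a <= y < b -> f y = g y) ->
  is_RInt_upper f a b v -> is_RInt_upper g a b v.
Proof.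
  intros E H eps Heps. destruct (H eps Heps) as [d [Hd K]].
  exists d; split; auto. intros e He1 He2. destruct (K e He1 He2) as [w [Hw Hv]].
  exists w; split; auto. apply (is_RInt_ext f); auto.
  intros y Hy. rewrite Rmin_left, Rmax_right in Hy by lra. apply E; lra.
Qed.

Lemma is_RInt_upper_plus f g a b v1 v2 :
  is_RInt_upper f a b v1 -> is_RInt_upper g a b v2 ->
  is_RInt_upper (fun y => f y + g y) a b (v1 + v2).
Proof.
  intros H1 H2 eps Heps.
  destruct (H1 (eps / 2)) as [d1 [Hd1 K1]]; [lra|].
  destruct (H2 (eps / 2)) as [d2 [Hd2 K2]]; [lra|].
  exists (Rmin d1 d2); split; [apply Rmin_pos; lra|].
  intros e He1 He2. assert (Hm1 := Rmin_l d1 d2). assert (Hm2 := Rmin_r d1 d2).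
  destruct (K1 e) as [w1 [Hw1 Hv1]]; [lra | lra |].
  destruct (K2 e) as [w2 [Hw2 Hv2]]; [lra | lra |].
  exists (w1 + w2); split; [exact (is_RInt_plus _ _ _ _ _ _ Hw1 Hw2)|].
  replace (w1 + w2 - (v1 + v2)) with ((w1 - v1) + (w2 - v2)) by ring.
  eapply Rle_lt_trans; [apply Rabs_triang | lra].
Qed.

Lemma is_RInt_upper_scal c f a b v :
  is_RInt_upper f a b v -> is_RInt_upper (fun y => c * f y) a b (c * v).
Proof.
  intros H eps Heps. assert (Hc := Rabs_pos c).
  destruct (H (eps / (Rabs c + 1))) as [d [Hd K]]; [apply Rdiv_lt_0_compat; lra|].
  exists d; split; auto. intros e He1 He2. destruct (K e He1 He2) as [w [Hw Hv]].
  exists (c * w); split; [exact (is_RInt_scal _ _ _ _ _ Hw)|].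
  replace (c * w - c * v) with (c * (w - v)) by ring. rewrite Rabs_mult.
  apply Rmult_lt_compat_l with (r := Rabs c + 1) in Hv; [|lra].
  replace ((Rabs c + 1) * (eps / (Rabs c + 1))) with eps in Hv by (field; lra).
  pose proof (Rabs_pos (w - v)). nra.
Qed.

Lemma derivable_pt_lim_Rpower_sub x r y : y < x ->
  derivable_pt_lim (fun z => Rpower (x - z) r) y (- (r * Rpower (x - y) (r - 1))).
Proof.
  intro Hy. assert (H := derivable_pt_lim_Rpower_affine x (-1) r y).
  replace (fun z => Rpower (x + -1 * z) r) with (fun z => Rpower (x - z) r) in H
    by (apply functional_extensionality; intro; f_equal; ring).
  replace (x + -1 * y) with (x - y) in H by ring.
  replace (- (r * Rpower (x - y) (r - 1))) with (r * Rpower (x - y) (r - 1) * -1) by ring.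
  apply H; lra.
Qed.

Lemma is_RInt_kernel r x e : 0 < r -> 0 < e < 1 + x ->
  is_RInt (fun y => Rpower (x - y) (r - 1)) (-1) (x - e)
    ((Rpower (1 + x) r - Rpower e r) / r).
Proof.
  intros Hr He. set (F := fun y => / r * - Rpower (x - y) r).
  replace ((Rpower (1 + x) r - Rpower e r) / r) with (minus (F (x - e)) (F (-1))).
  2: { unfold F, minus, plus, opp; simpl. replace (x - (x - e)) with e by ring.
       replace (x - -1) with (1 + x) by ring. field. lra. }
  apply (@is_RInt_derive R_CompleteNormedModule F); intros y Hy;
    rewrite Rmin_left, Rmax_right in Hy by lra.
  - apply is_derive_Reals. unfold F.
    replace (Rpower (x - y) (r - 1)) with (/ r * - (- (r * Rpower (x - y) (r - 1)))) at 1
      by (field; lra).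
    apply (derivable_pt_lim_scal (fun y => - Rpower (x - y) r)).
    apply (derivable_pt_lim_opp (fun y => Rpower (x - y) r)).
    apply derivable_pt_lim_Rpower_sub; lra.
  - apply (@ex_derive_continuous R_AbsRing R_NormedModule), ex_derive_Reals_1.
    exists (- ((r - 1) * Rpower (x - y) (r - 1 - 1))).
    apply derivable_pt_lim_Rpower_sub; lra.
Qed.

Lemma is_RInt_upper_kernel r x : 0 < r -> -1 < x ->
  is_RInt_upper (fun y => Rpower (x - y) (r - 1)) (-1) x (Rpower (1 + x) r / r).
Proof.
  intros Hr Hx eps Heps.
  exists (Rpower (eps * r) (/ r)); split; [apply exp_pos|].
  intros e He1 He2. exists ((Rpower (1 + x) r - Rpower e r) / r).
  split; [apply is_RInt_kernel; lra|].
  replace ((Rpower (1 + x) r - Rpower e r) / r - Rpower (1 + x) r / r)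
    with (- (Rpower e r / r)) by (field; lra).
  rewrite Rabs_Ropp, Rabs_right.
  2: { apply Rle_ge, Rlt_le, Rdiv_lt_0_compat; auto. apply exp_pos. }
  apply (Rmult_lt_reg_r r); auto. unfold Rdiv. rewrite Rmult_assoc, Rinv_l, Rmult_1_r by lra.
  assert (H : Rpower e r < Rpower (Rpower (eps * r) (/ r)) r) by (apply Rlt_Rpower_l; lra).
  rewrite Rpower_mult, Rinv_l, Rpower_1 in H by nra. lra.
Qed.

(* Induction on the coefficients of b in powers of (1+y), using
   (1+y) = (1+x) - (x-y) to pass from the exponent r to r and r+1. *)
Lemma is_RInt_upper_kernel_peval b : forall r, 0 < r ->
  exists w, (length w <= length b)%nat /\
  forall x, -1 < x ->
    is_RInt_upper (fun y => Rpower (x - y) (r - 1) * peval b (1 + y)) (-1) x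
      (Rpower (1 + x) r * peval w (1 + x)).
Proof.
  induction b as [|d b IH]; intros r Hr.
  - exists nil. split; [simpl; lia|]. intros x Hx.
    apply (is_RInt_upper_ext (fun y => 0 * Rpower (x - y) (r - 1))); [intros; simpl; ring|].
    replace (Rpower (1 + x) r * peval nil (1 + x)) with (0 * (Rpower (1 + x) r / r))
      by (simpl; ring).
    apply is_RInt_upper_scal, is_RInt_upper_kernel; auto.
  - destruct (IH r Hr) as [w1 [L1 H1]].
    destruct (IH (r + 1)) as [w2 [L2 H2]]; [lra|].
    exists ((d / r) :: padd w1 (pscale (-1) w2)). split.
    + simpl. rewrite length_padd, length_pscale. lia.
    + intros x Hx.
      assert (Hs := is_RInt_upper_plus _ _ _ _ _ _
        (is_RInt_upper_plus _ _ _ _ _ _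
          (is_RInt_upper_scal d _ _ _ _ (is_RInt_upper_kernel r x Hr Hx))
          (is_RInt_upper_scal (1 + x) _ _ _ _ (H1 x Hx)))
        (is_RInt_upper_scal (-1) _ _ _ _ (H2 x Hx))).
      replace (Rpower (1 + x) r * peval (d / r :: padd w1 (pscale (-1) w2)) (1 + x))
        with (d * (Rpower (1 + x) r / r) + (1 + x) * (Rpower (1 + x) r * peval w1 (1 + x))
              + -1 * (Rpower (1 + x) (r + 1) * peval w2 (1 + x))).
      2: { rewrite Rpower_plus, Rpower_1 by lra.
           rewrite peval_cons, peval_padd, peval_pscale. field. lra. }
      revert Hs. apply is_RInt_upper_ext. intros y Hy.
      replace (r + 1 - 1) with ((r - 1) + 1) by ring.
      rewrite Rpower_plus, Rpower_1 by lra. rewrite peval_cons. ring.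
Qed.

Lemma RLint_peval p r : 0 < r -> exists q, (length q <= length p)%nat /\
  forall x, -1 < x -> RLint r (peval p) x = Rpower (1 + x) r * peval q x.
Proof.
  intro Hr.
  destruct (peval_shift p (-1)) as [b [Lb Hb]].
  destruct (is_RInt_upper_kernel_peval b r Hr) as [w [Lw Hw]].
  destruct (peval_shift w 1) as [q [Lq Hq]].
  exists (pscale (/ Gamma r) q). split; [rewrite length_pscale; lia|].
  intros x Hx. unfold RLint.
  set (P := fun v => improper_int_upper
                       (fun y => Rpower (x - y) (r - 1) * peval p y) (-1) x v).
  assert (HI : P (Rpower (1 + x) r * peval w (1 + x))).
  { apply improper_int_upper_is_RInt_upper.
    apply (is_RInt_upper_ext (fun y => Rpower (x - y) (r - 1) * peval b (1 + y)));
      [|apply Hw; auto].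
    intros y _. rewrite Hb. do 2 f_equal. ring. }
  assert (HE := epsilon_spec (inhabits 0) P (ex_intro _ _ HI)).
  rewrite (improper_int_upper_unique _ (-1) x _ _ ltac:(lra) HE HI).
  rewrite peval_pscale, Hq. replace (x + 1) with (1 + x) by ring. unfold Rdiv. ring.
Qed.

Lemma hatI_RLint r p q y : -1 < y ->
  (forall x, -1 < x -> RLint r p x = Rpower (1 + x) r * peval q x) ->
  hatI r p y = peval q y.
Proof.
  intros Hy H. unfold hatI. rewrite H by auto.
  rewrite <- Rmult_assoc, <- Rpower_plus. replace (- r + r) with 0 by ring.
  rewrite Rpower_O by lra. ring.
Qed.

(** * Lagrange interpolation *)

Fixpoint lin_comb (c : nat -> R) (h : nat -> list R) (n : nat) : list R :=
  match n with
  | O => pscale (c O) (h O)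
  | S n' => padd (lin_comb c h n') (pscale (c (S n')) (h (S n')))
  end.

Lemma peval_lin_comb c h n s :
  peval (lin_comb c h n) s = sum_f_R0 (fun l => c l * peval (h l) s) n.
Proof.
  induction n as [|n IH]; simpl; rewrite ?peval_padd, peval_pscale; [|rewrite IH]; auto.
Qed.

Lemma length_lin_comb c h n m : (forall l, (l <= n)%nat -> (length (h l) <= m)%nat) ->
  (length (lin_comb c h n) <= m)%nat.
Proof.
  intro H. induction n as [|n IH]; simpl.
  - rewrite length_pscale; apply H; lia.
  - rewrite length_padd, length_pscale.
    assert (length (lin_comb c h n) <= m)%nat by (apply IH; intros; apply H; lia).
    assert (length (h (S n)) <= m)%nat by (apply H; lia). lia.
Qed.

Lemma sum_kron_lt (c : nat -> R) n i : (n < i)%nat ->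
  sum_f_R0 (fun l => c l * kron i l) n = 0.
Proof.
  unfold kron. induction n as [|n IH]; intro Hi; simpl;
    rewrite (proj2 (Nat.eqb_neq _ _)) by lia; [ring|].
  rewrite IH by lia. ring.
Qed.

Lemma sum_kron (c : nat -> R) n i : (i <= n)%nat ->
  sum_f_R0 (fun l => c l * kron i l) n = c i.
Proof.
  induction n as [|n IH]; intro Hi.
  - replace i with 0%nat by lia. unfold kron; simpl. ring.
  - simpl. destruct (Nat.eq_dec i (S n)) as [->|Hne].
    + rewrite sum_kron_lt by lia. unfold kron. rewrite Nat.eqb_refl. ring.
    + rewrite IH by lia. unfold kron. rewrite (proj2 (Nat.eqb_neq _ _)) by auto. ring.
Qed.

Lemma increasing_lt (x : nat -> R) N : (forall i, (i < N)%nat -> x i < x (S i)) ->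
  forall i j, (i < j)%nat -> (j <= N)%nat -> x i < x j.
Proof.
  intros H i j Hij. induction j as [|j IH]; [lia|]. intro Hj.
  destruct (Nat.eq_dec i j) as [->|Hne]; [apply H; lia|].
  apply Rlt_trans with (x j); [apply IH; lia | apply H; lia].
Qed.

Lemma lagrange_interpolation N (x : nat -> R) (h : nat -> list R) :
  (forall i, (i < N)%nat -> x i < x (S i)) ->
  (forall j, (j <= N)%nat -> (length (h j) <= S N)%nat) ->
  (forall i j, (i <= N)%nat -> (j <= N)%nat -> peval (h j) (x i) = kron i j) ->
  forall q, (length q <= S N)%nat ->
  peval q = fun s => sum_f_R0 (fun l => peval q (x l) * peval (h l) s) N.
Proof.
  intros Hx Hl Hk q Hq. apply functional_extensionality. intro s.
  set (c := fun l => peval q (x l)).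
  assert (Hd : forall s, peval (padd q (pscale (-1) (lin_comb c h N))) s = 0).
  { apply (peval_eq0_of_roots (S N) _ x).
    - rewrite length_padd, length_pscale.
      assert (length (lin_comb c h N) <= S N)%nat by (apply length_lin_comb; auto). lia.
    - intros i j Hi Hj Hij E.
      destruct (Nat.lt_total i j) as [L|[L|L]]; [|lia|].
      + assert (x i < x j) by (apply (increasing_lt x N); auto; lia). lra.
      + assert (x j < x i) by (apply (increasing_lt x N); auto; lia). lra.
    - intros i Hi. rewrite peval_padd, peval_pscale, peval_lin_comb.
      rewrite (sum_eq _ (fun l => c l * kron i l)) by (intros l Hl'; rewrite Hk by lia; auto).
      rewrite sum_kron by lia. unfold c. ring. }
  specialize (Hd s). rewrite peval_padd, peval_pscale, peval_lin_comb in Hd.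
  unfold c in Hd. lra.
Qed.

Lemma breveDmat_iter_euler_op mu k x h i l :
  breveDmat mu k x h i l = iter_euler_op k (INR k - mu) (peval (h l)) (x i).
Proof.
  unfold breveDmat. apply poly_val_is_poly; [apply is_poly_iter_euler_op, is_poly_peval|].
  intros y Hy. replace mu with (INR k - (INR k - mu)) at 1 by ring.
  apply weight_Dn_weight_mul; [apply is_poly_peval | auto | lra].
Qed.

Lemma hatDmat_iter_euler_op mu k x h i j q :
  (forall s, -1 < s -> RLint (INR k - mu) (peval (h j)) s
                       = Rpower (1 + s) (INR k - mu) * peval q s) ->
  hatDmat mu k x h i j = iter_euler_op k (INR k - mu) (peval q) (x i).
Proof.
  intro Hq. unfold hatDmat. apply poly_val_is_poly;
    [apply is_poly_iter_euler_op, is_poly_peval|].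
  intros y Hy. unfold hatD, RLder. replace mu with (INR k - (INR k - mu)) at 1 by ring.
  apply weight_Dn_weight_mul; [apply is_poly_peval | auto | lra].
Qed.

Lemma hatImat_peval r x h l j q :
  (forall s, -1 < s -> RLint r (peval (h j)) s = Rpower (1 + s) r * peval q s) ->
  hatImat r x h l j = peval q (x l).
Proof.
  intro Hq. unfold hatImat. apply poly_val_is_poly; [apply is_poly_peval|].
  intros y Hy. apply hatI_RLint; auto. lra.
Qed.

Theorem theorem3p3 (N : nat) (alpha beta : R) (x : nat -> R) (h : nat -> list R)
  (mu : R) (k : nat) :
  alpha > -1 -> beta > -1 ->
  (forall i, (i < N)%nat -> x i < x (S i)) ->
  (forall t, is_JGL_node alpha beta N t <-> exists i, (i <= N)%nat /\ x i = t) ->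
  (forall j, (j <= N)%nat -> (length (h j) <= S N)%nat) ->
  (forall i j, (i <= N)%nat -> (j <= N)%nat -> peval (h j) (x i) = kron i j) ->
  INR k - 1 < mu < INR k ->
  (forall i j, (i <= N)%nat -> (j <= N)%nat ->
     hatDmat mu k x h i j
     = sum_f_R0 (fun l => breveDmat mu k x h i l * hatImat (INR k - mu) x h l j) N)
  /\
  (k = 1%nat ->
   forall i j, (i <= N)%nat -> (j <= N)%nat ->
     breveDmat mu k x h i j = (1 - mu) * kron i j + (1 + x i) * Dmat x h i j).
Proof.
  intros _ _ Hx _ Hl Hk Hmu. split.
  - intros i j Hi Hj.
    destruct (RLint_peval (h j) (INR k - mu)) as [q [Lq Hq]]; [lra|].
    rewrite (hatDmat_iter_euler_op _ _ _ _ _ _ q Hq).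
    rewrite (lagrange_interpolation N x h Hx Hl Hk q) by (specialize (Hl j Hj); lia).
    rewrite iter_euler_op_sum by (intro; apply is_poly_peval).
    apply sum_eq. intros l _.
    rewrite breveDmat_iter_euler_op, (hatImat_peval _ _ _ _ _ q Hq). apply Rmult_comm.
  - intros -> i j Hi Hj. rewrite breveDmat_iter_euler_op. simpl.
    unfold euler_op, Dmat. rewrite Hk by auto. ring.
Qed.
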